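(* Let $K$ be a positive integer and $m$ an integer with $m\equiv K\pmod 2$. Then \[ C_{m,K}^{2K}(q)=\frac{q^{s(m,K,2K)}}{J_{1}^3}\,f_{K+1,K+1,1}\big(q^{K+1},q^{1+\frac{1}{2}(m+K)},q\big). \]
   Context: Let $q=e^{2\pi i\tau}$ with $\operatorname{Im}\tau>0$, and for real $\alpha$ put $q^{\alpha}:=e^{2\pi i\alpha\tau}$. For $x\in\mathbb{C}^*$, $j(x;q):=\sum_{n\in\mathbb{Z}}(-1)^nq^{n(n-1)/2}x^n$, and $J_1:=\prod_{i\ge1}(1-q^i)$. For positive integers $a,b,c$ and $x,y\in\mathbb{C}^*$, the Hecke-type double-sum is $f_{a,b,c}(x,y,q):=\Big(\sum_{r,s\ge0}-\sum_{r,s<0}\Big)(-1)^{r+s}x^ry^sq^{a\binom{r}{2}+brs+c\binom{s}{2}}$. For a positive integer $N$ and integers $m,\ell$ with $0\le\ell\le N$, $m\equiv\ell\pmod 2$, put $s(m,\ell,N):=-\frac18+\frac{(\ell+1)^2}{4(N+2)}-\frac{m^2}{4N}$. The level-$N$ $A_1^{(1)}$ string function is given by $C_{m,\ell}^{N}(q)=\dfrac{q^{s(m,\ell,N)}}{J_1^3}\, f_{1,1+N,1}\big(q^{1+\frac12(m+\ell)},q^{1-\frac12(m-\ell)},q\big)$. *)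

From Stdlib Require Import Reals ZArith List.
From Coquelicot Require Import Coquelicot.
Open Scope R_scope.

Definition limC (u : nat -> C) : C := @lim C_CompleteNormedModule (filtermap u eventually).

(* q^alpha := e^{2 pi i alpha tau}, alpha real. *)
Definition qpow (tau : C) (alpha : R) : C :=
  RtoC (exp (- 2 * PI * alpha * Im tau)) *
  (RtoC (cos (2 * PI * alpha * Re tau)) + Ci * RtoC (sin (2 * PI * alpha * Re tau)))%C.

Definition zpowC (x : C) (z : Z) : C :=
  match z with
  | Z0 => RtoC 1
  | Zpos p => pow_n x (Pos.to_nat p)
  | Zneg p => Cinv (pow_n x (Pos.to_nat p))
  end.

Definition zbin2 (n : Z) : Z := Z.div (n * (n - 1)) 2.

Definition hecke_term (a b c : Z) (x y q : C) (r s : Z) : C :=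
  (zpowC (RtoC (-1)) (r + s) * zpowC x r * zpowC y s *
   zpowC q (a * zbin2 r + b * r * s + c * zbin2 s))%C.

(* f_{a,b,c}(x,y,q) = (sum_{r,s>=0} - sum_{r,s<0}) ...,
   as the limit of square partial sums (the series converge absolutely). *)
Definition hecke_partial (a b c : Z) (x y q : C) (n : nat) : C :=
  (sum_n (fun r => sum_n (fun s => hecke_term a b c x y q (Z.of_nat r) (Z.of_nat s)) n) n
   - sum_n (fun r => sum_n (fun s =>
        hecke_term a b c x y q (- Z.of_nat (S r)) (- Z.of_nat (S s))) n) n)%C.

Definition hecke_f (a b c : Z) (x y q : C) : C := limC (hecke_partial a b c x y q).

Definition J1_partial (tau : C) (n : nat) : C :=
  fold_right Cmult (RtoC 1)
    (map (fun i => (RtoC 1 - qpow tau (INR (S i)))%C) (seq 0 n)).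

Definition J1 (tau : C) : C := limC (J1_partial tau).

Definition sfun (m l N : Z) : R :=
  - 1 / 8 + (IZR l + 1) ^ 2 / (4 * (IZR N + 2)) - (IZR m) ^ 2 / (4 * IZR N).

(* level-N A_1^(1) string function C^N_{m,l}(q) *)
Definition string_fn (m l N : Z) (tau : C) : C :=
  (qpow tau (sfun m l N) / (J1 tau) ^ 3 *
   hecke_f 1 (1 + N) 1 (qpow tau (1 + (IZR m + IZR l) / 2))
                       (qpow tau (1 - (IZR m - IZR l) / 2)) (qpow tau 1))%C.

From Stdlib Require Import Reals ZArith List Permutation Lia Lra.
From Coquelicot Require Import Coquelicot.
Open Scope R_scope.

(* Writing m = K + 2j, the corollary reduces to the identity of Hecke sums
     f_{1,1+2K,1}(q^{1+K+j}, q^{1-j}, q) = f_{K+1,K+1,1}(q^{K+1}, q^{1+K+j}, q).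
   Every lattice point is uniquely phi(r,s) = (2s, r-s) or psi(r,s) = (-2r-1, r-s),
   and the right summand T' satisfies T'(phi p) = T p, T'(psi p) = - T p, where T
   is the left summand.  Pulling the n-th (square) partial sum of the right side
   back along phi and psi, both partial sums become weighted sums of T over a
   square; the weights agree except at points of the two quadrants with
   |r|+|s| > n/2, where |T| <= e^{cD} e^{-2c(|r|+|s|)} with |q| = e^{-c}.  So the
   partial sums stay within a vanishing distance of each other and have equal
   limits. *)

Definition lsum {A} (l : list A) (g : A -> C) : C := fold_right Cplus (RtoC 0) (map g l).
Definition lsumR {A} (l : list A) (g : A -> R) : R := fold_right Rplus 0 (map g l).

Lemma lsum_app {A} (l1 l2 : list A) g : lsum (l1 ++ l2) g = (lsum l1 g + lsum l2 g)%C.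
Proof. induction l1; unfold lsum in *; simpl; [ring | rewrite IHl1; ring]. Qed.

Lemma lsum_map {A B} (f : A -> B) l g : lsum (map f l) g = lsum l (fun x => g (f x)).
Proof. unfold lsum. now rewrite map_map. Qed.

Lemma lsum_ext {A} (l : list A) g h :
  (forall x, In x l -> g x = h x) -> lsum l g = lsum l h.
Proof.
  induction l; intros H; unfold lsum in *; simpl; auto.
  rewrite H by now left. rewrite IHl; auto.
  intros; apply H; now right.
Qed.

Lemma lsum_perm {A} (l l' : list A) g : Permutation l l' -> lsum l g = lsum l' g.
Proof. induction 1; unfold lsum in *; simpl; try congruence; ring. Qed.

Lemma lsum_filter {A} (P : A -> bool) l g :
  lsum (filter P l) g = lsum l (fun x => if P x then g x else RtoC 0).
Proof.
  induction l; unfold lsum in *; simpl; auto.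
  destruct (P a); simpl; rewrite IHl; ring.
Qed.

Lemma lsum_embed {A} (l B : list A) (P : A -> bool) g :
  NoDup l -> NoDup B -> (forall x, In x l <-> In x B /\ P x = true) ->
  lsum l g = lsum B (fun x => if P x then g x else RtoC 0).
Proof.
  intros Hl HB H. rewrite <- lsum_filter. apply lsum_perm.
  apply NoDup_Permutation; auto using NoDup_filter.
  intros x. rewrite filter_In. apply H.
Qed.

Lemma lsum_plus {A} (l : list A) f g :
  lsum l (fun x => f x + g x)%C = (lsum l f + lsum l g)%C.
Proof. induction l; unfold lsum in *; simpl; [ring | rewrite IHl; ring]. Qed.

Lemma lsum_minus {A} (l : list A) f g :
  lsum l (fun x => f x - g x)%C = (lsum l f - lsum l g)%C.
Proof. induction l; unfold lsum in *; simpl; [ring | rewrite IHl; ring]. Qed.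

Lemma lsum_prod {A B} (l1 : list A) (l2 : list B) g :
  lsum (list_prod l1 l2) g = lsum l1 (fun a => lsum l2 (fun b => g (a, b))).
Proof.
  induction l1; simpl; [reflexivity |].
  rewrite lsum_app, lsum_map, IHl1. reflexivity.
Qed.

Lemma sum_n_lsum (f : nat -> C) n : sum_n f n = lsum (seq 0 (S n)) f.
Proof.
  induction n.
  - rewrite sum_O. unfold lsum; simpl. ring.
  - rewrite sum_Sn, IHn, (seq_S (S n)), lsum_app. unfold lsum at 3; simpl.
    change plus with Cplus. ring.
Qed.

Lemma Cmod_lsum {A} (l : list A) g : Cmod (lsum l g) <= lsumR l (fun x => Cmod (g x)).
Proof.
  induction l; unfold lsum, lsumR in *; simpl.
  - rewrite Cmod_0; lra.
  - eapply Rle_trans; [apply Cmod_triangle | lra].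
Qed.

Lemma lsumR_le {A} (l : list A) f g :
  (forall x, In x l -> f x <= g x) -> lsumR l f <= lsumR l g.
Proof.
  induction l; intros H; unfold lsumR in *; simpl; [lra |].
  apply Rplus_le_compat; [apply H; now left | apply IHl; intros; apply H; now right].
Qed.

Lemma lsumR_nonneg {A} (l : list A) f : (forall x, 0 <= f x) -> 0 <= lsumR l f.
Proof. intros H. induction l; unfold lsumR in *; simpl; [lra | specialize (H a); lra]. Qed.

Lemma lsumR_scal {A} (l : list A) c f : lsumR l (fun x => c * f x) = c * lsumR l f.
Proof. induction l; unfold lsumR in *; simpl; [ring | rewrite IHl; ring]. Qed.

Lemma lsumR_app {A} (l1 l2 : list A) g : lsumR (l1 ++ l2) g = lsumR l1 g + lsumR l2 g.
Proof. induction l1; unfold lsumR in *; simpl; [ring | rewrite IHl1; ring]. Qed.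

Lemma lsumR_map {A B} (f : A -> B) l g : lsumR (map f l) g = lsumR l (fun x => g (f x)).
Proof. unfold lsumR. now rewrite map_map. Qed.

Lemma lsumR_prod {A B} (l1 : list A) (l2 : list B) f g :
  lsumR (list_prod l1 l2) (fun p => f (fst p) * g (snd p)) = lsumR l1 f * lsumR l2 g.
Proof.
  induction l1; simpl; [unfold lsumR; simpl; ring |].
  rewrite lsumR_app, lsumR_map, IHl1. simpl. rewrite lsumR_scal.
  unfold lsumR; simpl; ring.
Qed.

Lemma NoDup_list_prod {A B} (l1 : list A) (l2 : list B) :
  NoDup l1 -> NoDup l2 -> NoDup (list_prod l1 l2).
Proof.
  induction l1; intros H1 H2; simpl; [constructor |].
  inversion H1; subst. apply NoDup_app; auto.
  - apply FinFun.Injective_map_NoDup; auto. intros x y Hxy; now injection Hxy.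
  - intros x Hx Hy. apply in_map_iff in Hx. destruct Hx as [b [<- _]].
    apply in_prod_iff in Hy. tauto.
Qed.

Definition cpolar (a t : R) : C := (RtoC (exp a) * (RtoC (cos t) + Ci * RtoC (sin t)))%C.

Lemma cpolar_pair a t : cpolar a t = (exp a * cos t, exp a * sin t).
Proof. unfold cpolar, Cmult, Cplus, RtoC, Ci; simpl. f_equal; ring. Qed.

Lemma cpolar_ext a t b u : a = b -> t = u -> cpolar a t = cpolar b u.
Proof. intros; subst; auto. Qed.

Lemma cpolar_mul a t b u : (cpolar a t * cpolar b u)%C = cpolar (a + b) (t + u).
Proof.
  rewrite !cpolar_pair. unfold Cmult; simpl.
  rewrite exp_plus, cos_plus, sin_plus. f_equal; ring.
Qed.

Lemma cpolar_0 : cpolar 0 0 = RtoC 1.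
Proof. rewrite cpolar_pair, exp_0, cos_0, sin_0. unfold RtoC. f_equal; ring. Qed.

Lemma cpolar_m1 : RtoC (-1) = cpolar 0 PI.
Proof. rewrite cpolar_pair, exp_0, cos_PI, sin_PI. unfold RtoC. f_equal; ring. Qed.

Lemma qpow_polar tau a : qpow tau a = cpolar (- 2 * PI * a * Im tau) (2 * PI * a * Re tau).
Proof. reflexivity. Qed.

Lemma pow_n_cpolar a t k : pow_n (cpolar a t) k = cpolar (a * INR k) (t * INR k).
Proof.
  induction k; simpl pow_n.
  - rewrite !Rmult_0_r, cpolar_0. reflexivity.
  - change mult with Cmult. rewrite IHk, cpolar_mul.
    apply cpolar_ext; rewrite S_INR; ring.
Qed.

Lemma Cinv_cpolar a t : Cinv (cpolar a t) = cpolar (- a) (- t).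
Proof.
  assert (Hprod : (cpolar a t * cpolar (-a) (-t))%C = RtoC 1).
  { rewrite cpolar_mul, <- cpolar_0. apply cpolar_ext; ring. }
  assert (Hnz : cpolar a t <> RtoC 0).
  { intro E. rewrite E, Cmult_0_l in Hprod. injection Hprod. lra. }
  rewrite <- (Cmult_1_r (Cinv (cpolar a t))), <- Hprod, Cmult_assoc, Cinv_l by auto.
  ring.
Qed.

Lemma zpowC_cpolar a t z : zpowC (cpolar a t) z = cpolar (a * IZR z) (t * IZR z).
Proof.
  destruct z; simpl.
  - rewrite !Rmult_0_r, cpolar_0. reflexivity.
  - rewrite pow_n_cpolar, <- positive_nat_Z, <- INR_IZR_INZ. reflexivity.
  - rewrite pow_n_cpolar, Cinv_cpolar.
    apply cpolar_ext; rewrite <- Pos2Z.opp_pos, opp_IZR, <- positive_nat_Z,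
      <- INR_IZR_INZ; ring.
Qed.

Lemma Cmod_cpolar a t : Cmod (cpolar a t) = exp a.
Proof.
  rewrite cpolar_pair. unfold Cmod; simpl.
  replace (exp a * cos t * (exp a * cos t * 1) + exp a * sin t * (exp a * sin t * 1))
    with (Rsqr (exp a)).
  - apply sqrt_Rsqr, Rlt_le, exp_pos.
  - pose proof (sin2_cos2 t) as Hpyth. unfold Rsqr in *.
    transitivity (exp a * exp a * (sin t * sin t + cos t * cos t)); [rewrite Hpyth |]; ring.
Qed.

Lemma cos_sin_period_Z x k :
  cos (x + 2 * PI * IZR k) = cos x /\ sin (x + 2 * PI * IZR k) = sin x.
Proof.
  destruct (Z_le_gt_dec 0 k).
  - rewrite <- (Z2Nat.id k), <- INR_IZR_INZ by lia.
    rewrite <- (cos_period x (Z.to_nat k)), <- (sin_period x (Z.to_nat k)).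
    split; f_equal; ring.
  - set (y := x + 2 * PI * IZR k).
    assert (Ex : x = y + 2 * INR (Z.to_nat (- k)) * PI).
    { unfold y. rewrite INR_IZR_INZ, Z2Nat.id, opp_IZR by lia. ring. }
    rewrite Ex, cos_period, sin_period. auto.
Qed.

Lemma cpolar_odd_shift a t k : cpolar a (t + 2 * PI * IZR k - PI) = (- cpolar a t)%C.
Proof.
  rewrite !cpolar_pair. unfold Copp; simpl.
  replace (t + 2 * PI * IZR k - PI) with ((t - PI) + 2 * PI * IZR k) by ring.
  destruct (cos_sin_period_Z (t - PI) k) as [-> ->]. unfold Rminus.
  rewrite cos_plus, sin_plus, cos_neg, sin_neg, cos_PI, sin_PI. f_equal; ring.
Qed.

Lemma hecke_term_polar (a b c : Z) ax tx ay ty aq tq r s :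
  hecke_term a b c (cpolar ax tx) (cpolar ay ty) (cpolar aq tq) r s =
  cpolar (ax * IZR r + ay * IZR s + aq * IZR (a * zbin2 r + b * r * s + c * zbin2 s))
    (PI * IZR (r + s) + tx * IZR r + ty * IZR s
     + tq * IZR (a * zbin2 r + b * r * s + c * zbin2 s)).
Proof.
  unfold hecke_term. rewrite cpolar_m1, !zpowC_cpolar, !cpolar_mul.
  apply cpolar_ext; rewrite plus_IZR; ring.
Qed.

Lemma zbin2_spec z : (2 * zbin2 z = z * (z - 1))%Z.
Proof.
  unfold zbin2. destruct (Z.Even_or_Odd z) as [[k ->]|[k ->]].
  - replace (2 * k * (2 * k - 1))%Z with ((k * (2 * k - 1)) * 2)%Z by ring.
    rewrite Z.div_mul by lia. ring.
  - replace ((2 * k + 1) * (2 * k + 1 - 1))%Z with ((k * (2 * k + 1)) * 2)%Z by ring.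
    rewrite Z.div_mul by lia. ring.
Qed.

(* Exponents of q in the summands of the two Hecke sums (m = K + 2j). *)
Definition qexp_lhs (K j r s : Z) : Z :=
  ((1 + K + j) * r + (1 - j) * s + (zbin2 r + (1 + 2 * K) * r * s + zbin2 s))%Z.
Definition qexp_rhs (K j r s : Z) : Z :=
  ((K + 1) * r + (1 + K + j) * s + ((K + 1) * zbin2 r + (K + 1) * r * s + zbin2 s))%Z.

Definition phi (p : Z * Z) : Z * Z := (2 * snd p, fst p - snd p)%Z.
Definition psi (p : Z * Z) : Z * Z := (- 2 * fst p - 1, fst p - snd p)%Z.

Lemma qexp_rhs_phi K j r s : qexp_rhs K j (2 * s) (r - s) = qexp_lhs K j r s.
Proof.
  unfold qexp_lhs, qexp_rhs.
  pose proof (zbin2_spec r). pose proof (zbin2_spec s).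
  pose proof (zbin2_spec (2 * s)). pose proof (zbin2_spec (r - s)). lia.
Qed.

Lemma qexp_rhs_psi K j r s : qexp_rhs K j (- 2 * r - 1) (r - s) = qexp_lhs K j r s.
Proof.
  unfold qexp_lhs, qexp_rhs.
  pose proof (zbin2_spec r). pose proof (zbin2_spec s).
  pose proof (zbin2_spec (- 2 * r - 1)). pose proof (zbin2_spec (r - s)). lia.
Qed.

Definition quadrant (r s : Z) : Prop := ((0 <= r /\ 0 <= s) \/ (r < 0 /\ s < 0))%Z.

Lemma quadrant_dec r s : {quadrant r s} + {~ quadrant r s}.
Proof.
  unfold quadrant.
  destruct (Z_le_gt_dec 0 r), (Z_le_gt_dec 0 s); [left | right | right | left]; lia.
Qed.

Lemma quadrant_form_lower (K u v r s : Z) : (0 <= K)%Z -> quadrant r s ->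
  (2 * (Z.abs r + Z.abs s) - (2 * Z.abs u + 2 * Z.abs v + 10) ^ 2 <=
   u * r + v * s + (zbin2 r + (1 + 2 * K) * r * s + zbin2 s))%Z.
Proof.
  intros HK Hq. generalize (zbin2_spec r) (zbin2_spec s).
  generalize (zbin2 r) (zbin2 s). intros Br Bs Hr2 Hs2.
  set (A1 := Z.abs u). set (A2 := Z.abs v).
  assert (Hu : (- A1 <= u <= A1)%Z) by (unfold A1; lia).
  assert (Hv : (- A2 <= v <= A2)%Z) by (unfold A2; lia).
  clearbody A1 A2.
  assert (Hconst : (0 <= (A1 + A2 + 5) * (A1 + A2 + 5))%Z) by (apply Z.square_nonneg).
  destruct Hq as [[Hr Hs]|[Hr Hs]].
  - rewrite (Z.abs_eq r), (Z.abs_eq s) by lia.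
    assert (Hlin_u : (0 <= (A1 + u) * r)%Z) by (apply Z.mul_nonneg_nonneg; lia).
    assert (Hlin_v : (0 <= (A2 + v) * s)%Z) by (apply Z.mul_nonneg_nonneg; lia).
    assert (Hcross : (0 <= K * (r * s))%Z) by (apply Z.mul_nonneg_nonneg; [|apply Z.mul_nonneg_nonneg]; lia).
    assert (Hsq : (0 <= (r + s - (A1 + A2 + 5)) * (r + s - (A1 + A2 + 5)))%Z)
      by apply Z.square_nonneg.
    assert (Hmix_u : (0 <= A1 * s)%Z) by (apply Z.mul_nonneg_nonneg; lia).
    assert (Hmix_v : (0 <= A2 * r)%Z) by (apply Z.mul_nonneg_nonneg; lia).
    clear Hu Hv HK. lia.
  - rewrite (Z.abs_neq r), (Z.abs_neq s) by lia.
    assert (Hlin_u : (0 <= (A1 - u) * (- r))%Z) by (apply Z.mul_nonneg_nonneg; lia).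
    assert (Hlin_v : (0 <= (A2 - v) * (- s))%Z) by (apply Z.mul_nonneg_nonneg; lia).
    assert (Hcross : (0 <= K * ((- r) * (- s)))%Z) by (apply Z.mul_nonneg_nonneg; [|apply Z.mul_nonneg_nonneg]; lia).
    assert (Hsq : (0 <= (r + s + (A1 + A2 + 5)) * (r + s + (A1 + A2 + 5)))%Z)
      by apply Z.square_nonneg.
    assert (Hmix_u : (0 <= A1 * (- s))%Z) by (apply Z.mul_nonneg_nonneg; lia).
    assert (Hmix_v : (0 <= A2 * (- r))%Z) by (apply Z.mul_nonneg_nonneg; lia).
    clear Hu Hv HK. lia.
Qed.

Definition qexp_shift (K j : Z) : Z := ((2 * Z.abs (1 + K + j) + 2 * Z.abs (1 - j) + 10) ^ 2)%Z.

Lemma qexp_lhs_lower K j r s : (0 <= K)%Z -> quadrant r s ->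
  (2 * (Z.abs r + Z.abs s) - qexp_shift K j <= qexp_lhs K j r s)%Z.
Proof. intros HK Hq. exact (quadrant_form_lower K (1 + K + j) (1 - j) r s HK Hq). Qed.

Definition box_pos (n : nat) : list (Z * Z) :=
  map (fun p => (Z.of_nat (fst p), Z.of_nat (snd p)))
    (list_prod (seq 0 (S n)) (seq 0 (S n))).
Definition box_neg (n : nat) : list (Z * Z) :=
  map (fun p => (- Z.of_nat (S (fst p)), - Z.of_nat (S (snd p))))%Z
    (list_prod (seq 0 (S n)) (seq 0 (S n))).

Definition in_box_pos (n : nat) (p : Z * Z) : bool :=
  (0 <=? fst p)%Z && (fst p <=? Z.of_nat n)%Z && ((0 <=? snd p)%Z && (snd p <=? Z.of_nat n)%Z).
Definition in_box_neg (n : nat) (p : Z * Z) : bool :=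
  (- Z.of_nat n - 1 <=? fst p)%Z && (fst p <=? -1)%Z
  && ((- Z.of_nat n - 1 <=? snd p)%Z && (snd p <=? -1)%Z).

Lemma in_box_pos_spec n p : in_box_pos n p = true <->
  (0 <= fst p <= Z.of_nat n /\ 0 <= snd p <= Z.of_nat n)%Z.
Proof. unfold in_box_pos. rewrite !Bool.andb_true_iff, !Z.leb_le. lia. Qed.

Lemma in_box_neg_spec n p : in_box_neg n p = true <->
  (- Z.of_nat n - 1 <= fst p <= -1 /\ - Z.of_nat n - 1 <= snd p <= -1)%Z.
Proof. unfold in_box_neg. rewrite !Bool.andb_true_iff, !Z.leb_le. lia. Qed.

Lemma In_box_pos n p : In p (box_pos n) <-> in_box_pos n p = true.
Proof.
  rewrite in_box_pos_spec. unfold box_pos. rewrite in_map_iff. split.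
  - intros [[a b] [<- H]]. apply in_prod_iff in H. rewrite !in_seq in H. simpl. lia.
  - destruct p as [a b]; cbn [fst snd]; intros H.
    exists (Z.to_nat a, Z.to_nat b). cbn [fst snd]. split.
    + f_equal; lia.
    + apply in_prod_iff; rewrite !in_seq; lia.
Qed.

Lemma In_box_neg n p : In p (box_neg n) <-> in_box_neg n p = true.
Proof.
  rewrite in_box_neg_spec. unfold box_neg. rewrite in_map_iff. split.
  - intros [[a b] [<- H]]. apply in_prod_iff in H. rewrite !in_seq in H. simpl. lia.
  - destruct p as [a b]; cbn [fst snd]; intros H.
    exists (Z.to_nat (- a - 1), Z.to_nat (- b - 1)). cbn [fst snd]. split.
    + f_equal; lia.
    + apply in_prod_iff; rewrite !in_seq; lia.
Qed.

Lemma NoDup_box_pos n : NoDup (box_pos n).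
Proof.
  apply FinFun.Injective_map_NoDup; [| apply NoDup_list_prod; apply seq_NoDup].
  intros [a b] [c d] H. simpl in H. apply pair_equal_spec in H; f_equal; lia.
Qed.

Lemma NoDup_box_neg n : NoDup (box_neg n).
Proof.
  apply FinFun.Injective_map_NoDup; [| apply NoDup_list_prod; apply seq_NoDup].
  intros [a b] [c d] H. simpl in H. apply pair_equal_spec in H; f_equal; lia.
Qed.

Definition zrange (L : nat) : list Z :=
  map Z.of_nat (seq 0 (S L)) ++ map (fun i => - Z.of_nat (S i))%Z (seq 0 L).

Lemma In_zrange L z : In z (zrange L) <-> (- Z.of_nat L <= z <= Z.of_nat L)%Z.
Proof.
  unfold zrange. rewrite in_app_iff, !in_map_iff. split.
  - intros [[i [<- H]]|[i [<- H]]]; rewrite in_seq in H; lia.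
  - intros H. destruct (Z_le_gt_dec 0 z).
    + left. exists (Z.to_nat z). rewrite in_seq. split; lia.
    + right. exists (Z.to_nat (- z - 1)). rewrite in_seq. split; lia.
Qed.

Lemma NoDup_zrange L : NoDup (zrange L).
Proof.
  unfold zrange. apply NoDup_app.
  - apply FinFun.Injective_map_NoDup; [intros a b H; lia | apply seq_NoDup].
  - apply FinFun.Injective_map_NoDup; [intros a b H; lia | apply seq_NoDup].
  - intros z H1 H2. rewrite in_map_iff in H1, H2.
    destruct H1 as [a [<- _]]. destruct H2 as [b [H _]]. lia.
Qed.

Definition square (L : nat) : list (Z * Z) := list_prod (zrange L) (zrange L).

Lemma In_square L p : In p (square L) <->
  (- Z.of_nat L <= fst p <= Z.of_nat L /\ - Z.of_nat L <= snd p <= Z.of_nat L)%Z.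
Proof. destruct p. unfold square. rewrite in_prod_iff, !In_zrange. simpl. tauto. Qed.

Lemma NoDup_square L : NoDup (square L).
Proof. apply NoDup_list_prod; apply NoDup_zrange. Qed.

Lemma NoDup_phi_psi L : NoDup (map phi (square L) ++ map psi (square L)).
Proof.
  apply NoDup_app.
  - apply FinFun.Injective_map_NoDup; [| apply NoDup_square].
    intros [a b] [c d] H; unfold phi in H; cbn [fst snd] in H.
    apply pair_equal_spec in H; f_equal; lia.
  - apply FinFun.Injective_map_NoDup; [| apply NoDup_square].
    intros [a b] [c d] H; unfold psi in H; cbn [fst snd] in H.
    apply pair_equal_spec in H; f_equal; lia.
  - intros x H1 H2. rewrite in_map_iff in H1, H2.
    destruct H1 as [[a b] [<- _]]. destruct H2 as [[c d] [H _]].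
    unfold phi, psi in H; cbn [fst snd] in H. apply pair_equal_spec in H; lia.
Qed.

(* ... and together they cover Z^2: (a, b) comes from phi if a is even and
   from psi if a is odd. *)
Lemma phi_psi_cover (L : nat) (p : Z * Z) :
  (Z.abs (fst p) + Z.abs (snd p) <= Z.of_nat L)%Z ->
  In p (map phi (square L) ++ map psi (square L)).
Proof.
  destruct p as [a b]; cbn [fst snd]; intros H. rewrite in_app_iff, !in_map_iff.
  destruct (Z.Even_or_Odd a) as [[k Hk]|[k Hk]].
  - left. exists ((k + b)%Z, k). unfold phi; cbn [fst snd]. split.
    + f_equal; lia.
    + rewrite In_square; cbn [fst snd]; lia.
  - right. exists ((- k - 1)%Z, (- k - 1 - b)%Z). unfold psi; cbn [fst snd]. split.
    + f_equal; lia.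
    + rewrite In_square; cbn [fst snd]; lia.
Qed.

Definition hecke_summand (a b c : Z) (x y q : C) (p : Z * Z) : C :=
  hecke_term a b c x y q (fst p) (snd p).

Lemma hecke_partial_boxes a b c x y q n :
  hecke_partial a b c x y q n =
  (lsum (box_pos n) (hecke_summand a b c x y q)
   - lsum (box_neg n) (hecke_summand a b c x y q))%C.
Proof.
  assert (Hdouble : forall g : nat -> nat -> C,
    sum_n (fun r => sum_n (fun s => g r s) n) n =
    lsum (list_prod (seq 0 (S n)) (seq 0 (S n))) (fun p => g (fst p) (snd p))).
  { intros g. rewrite sum_n_lsum, lsum_prod. apply lsum_ext; intros. apply sum_n_lsum. }
  unfold hecke_partial, box_pos, box_neg. rewrite !Hdouble, !lsum_map. reflexivity.
Qed.

Ltac push_IZR :=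
  repeat (rewrite plus_IZR || rewrite minus_IZR || rewrite mult_IZR || rewrite opp_IZR).

Definition term_lhs (tau : C) (K j : Z) : Z * Z -> C :=
  hecke_summand 1 (1 + 2 * K) 1 (qpow tau (1 + (IZR (K + 2 * j) + IZR K) / 2))
    (qpow tau (1 - (IZR (K + 2 * j) - IZR K) / 2)) (qpow tau 1).
Definition term_rhs (tau : C) (K j : Z) : Z * Z -> C :=
  hecke_summand (K + 1) (K + 1) 1 (qpow tau (IZR K + 1))
    (qpow tau (1 + (IZR (K + 2 * j) + IZR K) / 2)) (qpow tau 1).

(* |q| = exp (- decay tau). *)
Definition decay (tau : C) : R := 2 * PI * Im tau.

Lemma term_lhs_polar tau K j p : term_lhs tau K j p =
  cpolar (- decay tau * IZR (qexp_lhs K j (fst p) (snd p)))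
    (PI * IZR (fst p + snd p) + 2 * PI * Re tau * IZR (qexp_lhs K j (fst p) (snd p))).
Proof.
  unfold term_lhs, hecke_summand, decay. rewrite !qpow_polar, hecke_term_polar.
  unfold qexp_lhs. apply cpolar_ext; push_IZR; field.
Qed.

Lemma term_rhs_polar tau K j p : term_rhs tau K j p =
  cpolar (- decay tau * IZR (qexp_rhs K j (fst p) (snd p)))
    (PI * IZR (fst p + snd p) + 2 * PI * Re tau * IZR (qexp_rhs K j (fst p) (snd p))).
Proof.
  unfold term_rhs, hecke_summand, decay. rewrite !qpow_polar, hecke_term_polar.
  unfold qexp_rhs. apply cpolar_ext; push_IZR; field.
Qed.

Lemma term_rhs_phi tau K j p : term_rhs tau K j (phi p) = term_lhs tau K j p.
Proof.
  rewrite term_rhs_polar, term_lhs_polar. unfold phi; cbn [fst snd].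
  rewrite qexp_rhs_phi. apply cpolar_ext; [reflexivity |].
  do 3 f_equal. ring.
Qed.

Lemma term_rhs_psi tau K j p : term_rhs tau K j (psi p) = (- term_lhs tau K j p)%C.
Proof.
  rewrite term_rhs_polar, term_lhs_polar. unfold psi; cbn [fst snd].
  rewrite qexp_rhs_psi, <- (cpolar_odd_shift _ _ (- (fst p + snd p))).
  apply cpolar_ext; [reflexivity |].
  push_IZR. simpl (IZR (-2)). ring.
Qed.

Lemma Cmod_term_lhs tau K j p :
  Cmod (term_lhs tau K j p) = exp (- decay tau * IZR (qexp_lhs K j (fst p) (snd p))).
Proof. rewrite term_lhs_polar, Cmod_cpolar. reflexivity. Qed.

(* Indicator weights: the n-th left partial sum weights p by wt_lhs n p; the
   n-th right partial sum, pulled back along phi and psi, weights p by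
   wt_rhs n p. *)
Definition ind (b : bool) : R := if b then 1 else 0.

Definition wt_lhs (n : nat) (p : Z * Z) : R := ind (in_box_pos n p) - ind (in_box_neg n p).
Definition wt_rhs (n : nat) (p : Z * Z) : R :=
  ind (in_box_pos n (phi p)) - ind (in_box_pos n (psi p))
  - ind (in_box_neg n (phi p)) + ind (in_box_neg n (psi p)).

Lemma box_partial_as_weighted (g : Z * Z -> C) n L : (n + 1 <= L)%nat ->
  (lsum (box_pos n) g - lsum (box_neg n) g)%C =
  lsum (square L) (fun p => RtoC (wt_lhs n p) * g p)%C.
Proof.
  intros HL.
  rewrite (lsum_embed (box_pos n) (square L) (in_box_pos n)),
    (lsum_embed (box_neg n) (square L) (in_box_neg n)), <- lsum_minus;
    auto using NoDup_box_pos, NoDup_box_neg, NoDup_square.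
  - apply lsum_ext. intros p _. unfold wt_lhs.
    rewrite RtoC_minus. destruct (in_box_pos n p), (in_box_neg n p); unfold ind; ring.
  - intros x. rewrite In_box_neg, In_square, in_box_neg_spec. lia.
  - intros x. rewrite In_box_pos, In_square, in_box_pos_spec. lia.
Qed.

Lemma box_partial_as_weighted_pullback (g2 g1 : Z * Z -> C) n L : (2 * n + 2 <= L)%nat ->
  (forall p, g2 (phi p) = g1 p) -> (forall p, g2 (psi p) = - g1 p)%C ->
  (lsum (box_pos n) g2 - lsum (box_neg n) g2)%C =
  lsum (square L) (fun p => RtoC (wt_rhs n p) * g1 p)%C.
Proof.
  intros HL Hphi Hpsi. pose proof (NoDup_phi_psi L) as HPP.
  set (PP := map phi (square L) ++ map psi (square L)) in *.
  rewrite (lsum_embed (box_pos n) PP (in_box_pos n)),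
    (lsum_embed (box_neg n) PP (in_box_neg n));
    auto using NoDup_box_pos, NoDup_box_neg.
  - unfold PP. rewrite !lsum_app, !lsum_map.
    transitivity (lsum (square L) (fun p =>
      (if in_box_pos n (phi p) then g2 (phi p) else 0)
      + (if in_box_pos n (psi p) then g2 (psi p) else 0)
      - (if in_box_neg n (phi p) then g2 (phi p) else 0)
      - (if in_box_neg n (psi p) then g2 (psi p) else 0))%C).
    { rewrite !lsum_minus, !lsum_plus. ring. }
    apply lsum_ext. intros p _. unfold wt_rhs. rewrite Hphi, Hpsi.
    rewrite !RtoC_plus, !RtoC_minus. destruct (in_box_pos n (phi p)), (in_box_pos n (psi p)),
      (in_box_neg n (phi p)), (in_box_neg n (psi p)); unfold ind; ring.
  - intros x. rewrite In_box_neg. split; [| tauto]. intros H; split; auto.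
    apply phi_psi_cover. apply in_box_neg_spec in H. lia.
  - intros x. rewrite In_box_pos. split; [| tauto]. intros H; split; auto.
    apply phi_psi_cover. apply in_box_pos_spec in H. lia.
Qed.

Definition l1norm (p : Z * Z) : Z := (Z.abs (fst p) + Z.abs (snd p))%Z.

Lemma in_box_pos_reflect n p :
  reflect (0 <= fst p <= Z.of_nat n /\ 0 <= snd p <= Z.of_nat n)%Z (in_box_pos n p).
Proof. apply Bool.iff_reflect. symmetry. apply in_box_pos_spec. Qed.

Lemma in_box_neg_reflect n p :
  reflect (- Z.of_nat n - 1 <= fst p <= -1 /\ - Z.of_nat n - 1 <= snd p <= -1)%Z
    (in_box_neg n p).
Proof. apply Bool.iff_reflect. symmetry. apply in_box_neg_spec. Qed.

Ltac box_cases n p :=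
  unfold wt_lhs, wt_rhs, l1norm, quadrant, phi, psi in *;
  destruct (in_box_pos_reflect n p), (in_box_neg_reflect n p);
  try destruct (in_box_pos_reflect n (2 * snd p, fst p - snd p)%Z);
  try destruct (in_box_neg_reflect n (2 * snd p, fst p - snd p)%Z);
  try destruct (in_box_pos_reflect n (- 2 * fst p - 1, fst p - snd p)%Z);
  try destruct (in_box_neg_reflect n (- 2 * fst p - 1, fst p - snd p)%Z);
  cbn [fst snd ind] in *; first [lra | lia].

(* Once the box contains p, phi p and psi p, membership depends only on
   signs, and the two weights coincide. *)
Lemma wt_agree_small n p : (2 * l1norm p <= Z.of_nat n)%Z -> wt_lhs n p = wt_rhs n p.
Proof. intros H. box_cases n p. Qed.

Lemma wt_lhs_stable n n' p :
  (2 * l1norm p <= Z.of_nat n)%Z -> (n <= n')%nat -> wt_lhs n' p = wt_lhs n p.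
Proof.
  intros H Hn. unfold wt_lhs, l1norm in *.
  destruct (in_box_pos_reflect n p), (in_box_neg_reflect n p),
    (in_box_pos_reflect n' p), (in_box_neg_reflect n' p); cbn [ind]; first [lra | lia].
Qed.

Lemma wt_outside_quadrant n p :
  ~ quadrant (fst p) (snd p) -> wt_lhs n p = 0 /\ wt_rhs n p = 0.
Proof. intros H. split; box_cases n p. Qed.

(* Where the weights can differ: far out in the quadrants. *)
Definition tail_region (n : nat) (p : Z * Z) : Prop :=
  quadrant (fst p) (snd p) /\ (Z.of_nat n < 2 * l1norm p)%Z.

Lemma tail_region_dec n p : {tail_region n p} + {~ tail_region n p}.
Proof.
  unfold tail_region.
  destruct (quadrant_dec (fst p) (snd p)) as [Hq | Hq];
    [destruct (Z_lt_le_dec (Z.of_nat n) (2 * l1norm p)) as [Hlt | Hle] |].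
  - left. split; assumption.
  - right. intros [_ Hlt]. lia.
  - right. intros [Hq' _]. contradiction.
Qed.

Lemma off_tail_small n p :
  quadrant (fst p) (snd p) -> ~ tail_region n p -> (2 * l1norm p <= Z.of_nat n)%Z.
Proof. intros Hq H. apply Z.nlt_ge. intros Hlt. apply H. split; assumption. Qed.

Lemma wt_lhs_rhs_off_tail n p : ~ tail_region n p -> wt_lhs n p - wt_rhs n p = 0.
Proof.
  intros H. destruct (quadrant_dec (fst p) (snd p)) as [Hq | Hq].
  - rewrite wt_agree_small; [lra | exact (off_tail_small n p Hq H)].
  - destruct (wt_outside_quadrant n p Hq) as [-> ->]. lra.
Qed.

Lemma wt_lhs_lhs_off_tail n n' p :
  (n <= n')%nat -> ~ tail_region n p -> wt_lhs n' p - wt_lhs n p = 0.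
Proof.
  intros Hn H. destruct (quadrant_dec (fst p) (snd p)) as [Hq | Hq].
  - rewrite (wt_lhs_stable n n'); [lra | exact (off_tail_small n p Hq H) | exact Hn].
  - rewrite (proj1 (wt_outside_quadrant n p Hq)), (proj1 (wt_outside_quadrant n' p Hq)). lra.
Qed.

Lemma ind_bounds b : 0 <= ind b <= 1.
Proof. destruct b; unfold ind; lra. Qed.

Lemma wt_lhs_rhs_bound n p : Rabs (wt_lhs n p - wt_rhs n p) <= 4.
Proof.
  unfold wt_lhs, wt_rhs.
  pose proof (ind_bounds (in_box_pos n p)). pose proof (ind_bounds (in_box_neg n p)).
  pose proof (ind_bounds (in_box_pos n (phi p))). pose proof (ind_bounds (in_box_neg n (phi p))).
  pose proof (ind_bounds (in_box_pos n (psi p))). pose proof (ind_bounds (in_box_neg n (psi p))).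
  apply Rabs_le; lra.
Qed.

Lemma wt_lhs_lhs_bound n n' p : Rabs (wt_lhs n' p - wt_lhs n p) <= 4.
Proof.
  unfold wt_lhs.
  pose proof (ind_bounds (in_box_pos n p)). pose proof (ind_bounds (in_box_neg n p)).
  pose proof (ind_bounds (in_box_pos n' p)). pose proof (ind_bounds (in_box_neg n' p)).
  apply Rabs_le; lra.
Qed.

Lemma exp_le_mono x y : x <= y -> exp x <= exp y.
Proof.
  intros H. destruct (Rle_lt_or_eq_dec x y H) as [Hlt | ->]; [| lra].
  apply Rlt_le, exp_increasing, Hlt.
Qed.

Lemma exp_mul_INR a i : exp (a * INR i) = exp a ^ i.
Proof.
  induction i; [simpl; rewrite Rmult_0_r, exp_0; reflexivity |].
  rewrite S_INR, Rmult_plus_distr_l, Rmult_1_r, exp_plus, IHi. simpl. ring.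
Qed.

Lemma geometric_partial_bound x k : 0 <= x < 1 ->
  lsumR (seq 0 k) (fun i => x ^ i) <= 1 / (1 - x).
Proof.
  intros Hx.
  assert (Htele : lsumR (seq 0 k) (fun i => x ^ i) * (1 - x) = 1 - x ^ k).
  { induction k; [unfold lsumR; simpl; ring |].
    rewrite seq_S, lsumR_app, Rmult_plus_distr_r, IHk. unfold lsumR; simpl. ring. }
  assert (0 <= x ^ k) by (apply pow_le; lra).
  apply (Rmult_le_reg_r (1 - x)); [lra |]. rewrite Htele. field_simplify; lra.
Qed.

Lemma zrange_geometric_bound c L : 0 < c ->
  lsumR (zrange L) (fun z => exp (- c * IZR (Z.abs z))) <= 2 / (1 - exp (- c)).
Proof.
  intros Hc. set (x := exp (- c)).
  assert (Hx : 0 <= x < 1).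
  { unfold x. split; [apply Rlt_le, exp_pos | rewrite <- exp_0; apply exp_increasing; lra]. }
  unfold zrange. rewrite lsumR_app, !lsumR_map.
  apply Rle_trans with
    (lsumR (seq 0 (S L)) (fun i => x ^ i) + lsumR (seq 0 L) (fun i => x ^ i)).
  - apply Rplus_le_compat; apply lsumR_le; intros i _.
    + rewrite Z.abs_eq, <- INR_IZR_INZ, exp_mul_INR by lia. unfold x; lra.
    + rewrite Z.abs_neq, Z.opp_involutive, <- INR_IZR_INZ, exp_mul_INR by lia.
      fold x. simpl. assert (0 <= x ^ i) by (apply pow_le; lra).
      assert (x * x ^ i <= 1 * x ^ i) by (apply Rmult_le_compat_r; lra). lra.
  - pose proof (geometric_partial_bound x (S L) Hx).
    pose proof (geometric_partial_bound x L Hx).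
    replace (2 / (1 - x)) with (1 / (1 - x) + 1 / (1 - x)) by (field; lra). lra.
Qed.

Lemma term_lhs_tail_pointwise tau K j n p : (0 <= K)%Z -> 0 < decay tau ->
  tail_region n p ->
  Cmod (term_lhs tau K j p) <=
  exp (decay tau * IZR (qexp_shift K j)) * exp (- decay tau * INR n / 2)
  * (exp (- decay tau * IZR (Z.abs (fst p))) * exp (- decay tau * IZR (Z.abs (snd p)))).
Proof.
  intros HK Hc [Hq Hn]. rewrite Cmod_term_lhs. set (c := decay tau) in *.
  pose proof (qexp_lhs_lower K j (fst p) (snd p) HK Hq) as Hlow.
  apply IZR_le in Hlow. apply IZR_lt in Hn. unfold l1norm in *.
  rewrite minus_IZR, mult_IZR, plus_IZR in Hlow. rewrite mult_IZR, plus_IZR, <- INR_IZR_INZ in Hn.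
  rewrite <- !exp_plus. apply exp_le_mono. nra.
Qed.

Definition tail_bound (c D : R) (n : nat) : R :=
  4 * exp (c * D) * exp (- c * INR n / 2) * ((2 / (1 - exp (- c))) * (2 / (1 - exp (- c)))).

Lemma weighted_tail_estimate tau K j L n (w : Z * Z -> R) : (0 <= K)%Z -> 0 < Im tau ->
  (forall p, ~ tail_region n p -> w p = 0) -> (forall p, Rabs (w p) <= 4) ->
  Cmod (lsum (square L) (fun p => RtoC (w p) * term_lhs tau K j p)%C)
  <= tail_bound (decay tau) (IZR (qexp_shift K j)) n.
Proof.
  intros HK Ht Hsupp Hbnd. set (c := decay tau).
  assert (Hc : 0 < c) by (unfold c, decay; pose proof PI_RGT_0; nra).
  set (f := fun z : Z => exp (- c * IZR (Z.abs z))).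
  set (C0 := 4 * exp (c * IZR (qexp_shift K j)) * exp (- c * INR n / 2)).
  assert (HC0 : 0 <= C0).
  { unfold C0. pose proof (exp_pos (c * IZR (qexp_shift K j))).
    pose proof (exp_pos (- c * INR n / 2)). apply Rmult_le_pos; lra. }
  assert (Hf : forall z, 0 <= f z) by (intros; apply Rlt_le, exp_pos).
  eapply Rle_trans; [apply Cmod_lsum |].
  apply Rle_trans with (lsumR (square L) (fun p => C0 * (f (fst p) * f (snd p)))).
  - apply lsumR_le. intros p _. rewrite Cmod_mult, Cmod_R.
    destruct (tail_region_dec n p) as [Htail | Hoff].
    + replace (C0 * (f (fst p) * f (snd p))) with
        (4 * (exp (c * IZR (qexp_shift K j)) * exp (- c * INR n / 2)
              * (f (fst p) * f (snd p)))) by (unfold C0; ring).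
      apply Rmult_le_compat; auto using Rabs_pos, Cmod_ge_0.
      apply term_lhs_tail_pointwise; auto.
    + rewrite (Hsupp p Hoff), Rabs_R0, Rmult_0_l.
      apply Rmult_le_pos; [exact HC0 | apply Rmult_le_pos; apply Hf].
  - rewrite lsumR_scal. unfold square. rewrite (lsumR_prod (zrange L) (zrange L) f f).
    pose proof (zrange_geometric_bound c L Hc) as Hgeo. fold f in Hgeo.
    pose proof (lsumR_nonneg (zrange L) f Hf).
    unfold tail_bound. fold c. fold C0.
    apply Rmult_le_compat_l; [exact HC0 |]. apply Rmult_le_compat; auto.
Qed.

Definition vanishes (t : nat -> R) : Prop :=
  forall eps, 0 < eps -> exists N, forall n, (N <= n)%nat -> t n < eps.

Lemma tail_bound_vanishes c D : 0 < c -> vanishes (tail_bound c D).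
Proof.
  intros Hc eps Heps.
  set (G := 2 / (1 - exp (- c))).
  assert (HG : 0 < G).
  { unfold G. apply Rdiv_lt_0_compat; [lra |].
    assert (exp (- c) < 1) by (rewrite <- exp_0; apply exp_increasing; lra). lra. }
  set (A := 4 * exp (c * D) * (G * G)).
  assert (HA : 0 < A).
  { unfold A. pose proof (exp_pos (c * D)). apply Rmult_lt_0_compat; nra. }
  set (M := - 2 * ln (eps / A) / c).
  exists (Z.to_nat (up M)). intros n Hn.
  assert (HM : M < INR n).
  { destruct (archimed M) as [Hup _]. apply le_INR in Hn.
    assert (IZR (up M) <= INR (Z.to_nat (up M))).
    { destruct (Z_le_gt_dec 0 (up M)).
      - rewrite INR_IZR_INZ, Z2Nat.id by lia. lra.
      - replace (Z.to_nat (up M)) with 0%nat by lia. simpl. apply IZR_le. lia. }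
    lra. }
  replace (tail_bound c D n) with (A * exp (- c * INR n / 2)) by (unfold tail_bound, A, G; ring).
  assert (Hsmall : exp (- c * INR n / 2) < eps / A).
  { rewrite <- (exp_ln (eps / A)) by (apply Rdiv_lt_0_compat; lra).
    apply exp_increasing. unfold M in HM.
    apply (Rmult_lt_compat_l c) in HM; auto.
    replace (c * (- 2 * ln (eps / A) / c)) with (- 2 * ln (eps / A)) in HM by (field; lra).
    lra. }
  apply (Rmult_lt_compat_l A) in Hsmall; auto.
  replace (A * (eps / A)) with eps in Hsmall by (field; lra). lra.
Qed.

Definition Ccauchy (u : nat -> C) : Prop :=
  forall eps, 0 < eps -> exists N, forall n p, (N <= n)%nat -> (N <= p)%nat ->
    Cmod (u p - u n) < eps.

Lemma Cmod_ball (x y : C) (eps : R) :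
  Cmod (y - x) < eps -> @ball C_CompleteNormedModule x eps y.
Proof. intros H. apply (@norm_compat1 _ C_NormedModule). exact H. Qed.

Lemma ball_Cmod (x y : C) (eps : posreal) : @ball C_CompleteNormedModule x eps y ->
  Cmod (y - x) < @norm_factor C_AbsRing C_NormedModule * eps.
Proof. intros H. apply (@norm_compat2 _ C_NormedModule). exact H. Qed.

Lemma limC_cauchy (u : nat -> C) : Ccauchy u ->
  forall eps, 0 < eps -> exists N, forall n, (N <= n)%nat -> Cmod (u n - limC u) < eps.
Proof.
  intros Hu.
  assert (Hcauchy : cauchy (T := C_CompleteNormedModule) (filtermap u eventually)).
  { intros eps. destruct (Hu eps (cond_pos eps)) as [N HN].
    exists (u N), N. intros p Hp. apply Cmod_ball. apply HN; lia. }
  assert (Hproper : ProperFilter (filtermap u eventually)).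
  { apply filtermap_proper_filter, eventually_filter. }
  pose proof (@complete_cauchy C_CompleteNormedModule _ Hproper Hcauchy) as Hlim.
  fold (limC u) in Hlim.
  pose proof (norm_factor_gt_0 (K := C_AbsRing) (V := C_NormedModule)) as Hnf.
  set (nf := @norm_factor C_AbsRing C_NormedModule) in *.
  intros eps Heps.
  assert (Heps' : 0 < eps / nf) by (apply Rdiv_lt_0_compat; lra).
  destruct (Hlim (mkposreal _ Heps')) as [N HN]. exists N. intros n Hn.
  specialize (HN n Hn). apply ball_Cmod in HN. simpl in HN. fold nf in HN.
  replace eps with (nf * (eps / nf)) by (field; lra). exact HN.
Qed.

Lemma C_eq_of_arbitrarily_close (x y : C) :
  (forall eps, 0 < eps -> Cmod (x - y) < eps) -> x = y.
Proof.
  intros H. assert (Hd : Cmod (x - y) = 0).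
  { destruct (Rle_lt_or_eq_dec 0 _ (Cmod_ge_0 (x - y))) as [Hpos | Hzero]; [| lra].
    specialize (H _ Hpos). lra. }
  apply Cmod_eq_0 in Hd. replace x with ((x - y) + y)%C by ring. rewrite Hd. ring.
Qed.

Lemma limC_eq_of_close (u v : nat -> C) (t : nat -> R) : vanishes t ->
  (forall n p, (n <= p)%nat -> Cmod (u p - u n) <= t n) ->
  (forall n, Cmod (u n - v n) <= t n) ->
  limC u = limC v.
Proof.
  intros Ht Hu Huv.
  assert (Cu : Ccauchy u).
  { intros eps Heps. destruct (Ht (eps / 2) ltac:(lra)) as [N HN]. exists N.
    intros n p Hn Hp. replace (u p - u n)%C with ((u p - u N) - (u n - u N))%C by ring.
    eapply Rle_lt_trans; [apply Cmod_triangle |]. rewrite Cmod_opp.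
    pose proof (Hu N p Hp). pose proof (Hu N n Hn). pose proof (HN N (le_n _)). lra. }
  assert (Cv : Ccauchy v).
  { intros eps Heps. destruct (Cu (eps / 3) ltac:(lra)) as [N1 H1].
    destruct (Ht (eps / 3) ltac:(lra)) as [N2 H2]. exists (N1 + N2)%nat.
    intros n p Hn Hp.
    replace (v p - v n)%C with ((u p - u n) - (u p - v p) + (u n - v n))%C by ring.
    eapply Rle_lt_trans; [apply Cmod_triangle |].
    eapply Rle_lt_trans; [apply Rplus_le_compat_r, Cmod_triangle |]. rewrite Cmod_opp.
    pose proof (H1 n p ltac:(lia) ltac:(lia)). pose proof (Huv p). pose proof (Huv n).
    pose proof (H2 p ltac:(lia)). pose proof (H2 n ltac:(lia)). lra. }
  apply C_eq_of_arbitrarily_close. intros eps Heps.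
  destruct (limC_cauchy u Cu (eps / 3) ltac:(lra)) as [N1 H1].
  destruct (limC_cauchy v Cv (eps / 3) ltac:(lra)) as [N2 H2].
  destruct (Ht (eps / 3) ltac:(lra)) as [N3 H3].
  set (n := (N1 + N2 + N3)%nat).
  specialize (H1 n ltac:(unfold n; lia)). specialize (H2 n ltac:(unfold n; lia)).
  specialize (H3 n ltac:(unfold n; lia)). pose proof (Huv n).
  replace (limC u - limC v)%C with ((- (u n - limC u)) + (u n - v n) + (v n - limC v))%C
    by ring.
  eapply Rle_lt_trans; [apply Cmod_triangle |].
  eapply Rle_lt_trans; [apply Rplus_le_compat_r, Cmod_triangle |]. rewrite Cmod_opp. lra.
Qed.

Definition partial_lhs (tau : C) (K j : Z) : nat -> C :=
  hecke_partial 1 (1 + 2 * K) 1 (qpow tau (1 + (IZR (K + 2 * j) + IZR K) / 2))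
    (qpow tau (1 - (IZR (K + 2 * j) - IZR K) / 2)) (qpow tau 1).
Definition partial_rhs (tau : C) (K j : Z) : nat -> C :=
  hecke_partial (K + 1) (K + 1) 1 (qpow tau (IZR K + 1))
    (qpow tau (1 + (IZR (K + 2 * j) + IZR K) / 2)) (qpow tau 1).

Lemma partial_lhs_weighted tau K j n L : (n + 1 <= L)%nat ->
  partial_lhs tau K j n = lsum (square L) (fun p => RtoC (wt_lhs n p) * term_lhs tau K j p)%C.
Proof.
  intros HL. unfold partial_lhs. rewrite hecke_partial_boxes.
  exact (box_partial_as_weighted (term_lhs tau K j) n L HL).
Qed.

Lemma partial_rhs_weighted tau K j n L : (2 * n + 2 <= L)%nat ->
  partial_rhs tau K j n = lsum (square L) (fun p => RtoC (wt_rhs n p) * term_lhs tau K j p)%C.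
Proof.
  intros HL. unfold partial_rhs. rewrite hecke_partial_boxes.
  apply (box_partial_as_weighted_pullback (term_rhs tau K j)); auto using term_rhs_phi, term_rhs_psi.
Qed.

Lemma weighted_sum_diff (l : list (Z * Z)) (w w' : Z * Z -> R) (g : Z * Z -> C) :
  (lsum l (fun p => RtoC (w p) * g p) - lsum l (fun p => RtoC (w' p) * g p))%C =
  lsum l (fun p => RtoC (w p - w' p) * g p)%C.
Proof. rewrite <- lsum_minus. apply lsum_ext. intros p _. rewrite RtoC_minus. ring. Qed.

Lemma hecke_f_change_of_variables tau K j : 0 < Im tau -> (0 <= K)%Z ->
  hecke_f 1 (1 + 2 * K) 1 (qpow tau (1 + (IZR (K + 2 * j) + IZR K) / 2))
    (qpow tau (1 - (IZR (K + 2 * j) - IZR K) / 2)) (qpow tau 1) =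
  hecke_f (K + 1) (K + 1) 1 (qpow tau (IZR K + 1))
    (qpow tau (1 + (IZR (K + 2 * j) + IZR K) / 2)) (qpow tau 1).
Proof.
  intros Ht HK. unfold hecke_f. fold (partial_lhs tau K j) (partial_rhs tau K j).
  apply limC_eq_of_close with (t := tail_bound (decay tau) (IZR (qexp_shift K j))).
  - apply tail_bound_vanishes. unfold decay. pose proof PI_RGT_0. nra.
  - intros n p Hnp.
    rewrite (partial_lhs_weighted tau K j p (2 * p + 2)),
      (partial_lhs_weighted tau K j n (2 * p + 2)), weighted_sum_diff by lia.
    apply weighted_tail_estimate; auto using wt_lhs_lhs_off_tail, wt_lhs_lhs_bound.
  - intros n.
    rewrite (partial_lhs_weighted tau K j n (2 * n + 2)),
      (partial_rhs_weighted tau K j n (2 * n + 2)), weighted_sum_diff by lia.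
    apply weighted_tail_estimate; auto using wt_lhs_rhs_off_tail, wt_lhs_rhs_bound.
Qed.

Theorem corollary1p2 (tau : C) (Htau : 0 < Im tau) (K : Z) (HK : (0 < K)%Z)
  (m : Z) (Hm : Z.Even (m - K)) :
  string_fn m K (2 * K) tau =
  (qpow tau (sfun m K (2 * K)) / (J1 tau) ^ 3 *
   hecke_f (K + 1) (K + 1) 1 (qpow tau (IZR K + 1))
     (qpow tau (1 + (IZR m + IZR K) / 2)) (qpow tau 1))%C.
Proof.
  destruct Hm as [j Hj]. replace m with (K + 2 * j)%Z by lia.
  unfold string_fn.
  rewrite (hecke_f_change_of_variables tau K j Htau ltac:(lia)). reflexivity.
Qed.
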